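(* Let $X$ be a pure $d$-dimensional simplicial complex which is a $\gamma$-coboundary expander with coefficients in a group $G$, and let $1\le k\le d-1$. Then for every $f\in C^1(R_k(X);G)$, $\|d_1f\|\ \ge\ \gamma\cdot \mathrm{dist}\big(f, Z^1(R_k(X);G)\big)$, where norms and distances are taken in $R_k(X)$.
   Context: $X(i)$ = faces with $i+1$ elements. For a pure $D$-dimensional complex $Y$, weights $w_Y(\sigma)=|\{\tau\in Y(D):\sigma\subseteq\tau\}|/(\binom{D+1}{|\sigma|}|Y(D)|)$; norm of a set of faces = sum of weights. Link $X_\sigma=\{\tau\setminus\sigma:\sigma\subseteq\tau\in X\}$. Cochains: $C^0(Y;G)$ functions on vertices; $C^1(Y;G)$ functions $f$ on ordered edges with $f(v,u)=f(u,v)^{-1}$; $d_0g(u,v)=g(u)g(v)^{-1}$; $d_1f(u,v,w)=f(u,v)f(v,w)f(w,u)$ on triangles; $B^0$ = constants, $B^1=\mathrm{im}\,d_0$, $Z^1=\{f:d_1f\equiv1\}$; $\|f\|$ = norm of the set of faces where $f\ne1$, $\mathrm{dist}(f,g)=\|fg^{-1}\|$. $h_0(Y;G)=\min_{g\notin B^0}\|d_0g\|/\mathrm{dist}(g,B^0)$, $h_1(Y;G)=\min_{f\notin B^1}\|d_1f\|/\mathrm{dist}(f,B^1)$; $X$ is a $\gamma$-coboundary expander with coefficients in $G$ if $h_0(X_\sigma;G),h_1(X_\sigma;G)\ge\gamma$ for every face $\sigma$ of dimension $<d-2$ (including $\emptyset$). The $k$-th representation complex $R_k(X)$: its vertices are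 the faces in $X(k)$; for $1\le i\le d-k$ its $i$-faces are the sets $S$ of $i+1$ distinct elements of $X(k)$ with $\bigcup S\in X(i+k)$ and $|\bigcap S|=k$; plus the empty face. It is pure of dimension $d-k$ with its own weights. *)

From HB Require Import structures.
From mathcomp Require Import boolp classical_sets reals.
From mathcomp Require Import all_boot all_order all_algebra.
Set Implicit Arguments. Unset Strict Implicit. Unset Printing Implicit Defensive.
Import Order.TTheory GRing.Theory Num.Theory.

Local Open Scope ring_scope.

Section Complex.
Variable T : finType.
Implicit Types (Y : {set {set T}}) (s t : {set T}).

Definition simplicial_complex Y : Prop :=
  set0 \in Y /\ forall t s, t \in Y -> s \subset t -> s \in Y.

Definition pure_dim Y (D : nat) : Prop :=
  (forall t, t \in Y -> (#|t| <= D.+1)%N) /\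
  (forall t, t \in Y -> exists2 u, u \in Y & (#|u| == D.+1) && (t \subset u)).

Definition link Y s : {set {set T}} := [set t :\: s | t in Y & s \subset t].

Definition top_faces Y (D : nat) := [set t in Y | #|t| == D.+1].

Definition weight (R : realType) Y (D : nat) s : R :=
  (#|[set t in top_faces Y D | s \subset t]|)%:R /
  (('C(D.+1, #|s|) * #|top_faces Y D|)%N)%:R.
End Complex.

Section Cochains.
Variables (R : realType) (G : groupType) (T : finType).
Variables (Y : {set {set T}}) (D : nat).

Definition vertexY (v : T) := [set v] \in Y.
Definition edgeY (u v : T) := (u != v) && ([set u; v] \in Y).
Definition triY (u v w : T) :=
  [&& u != v, v != w, w != u & [set u; v; w] \in Y].

Definition C1 (f : T -> T -> G) : Prop :=
  forall u v, edgeY u v -> f v u = ((f u v)^-1)%g.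

Definition d0 (g : T -> G) : T -> T -> G := fun u v => (g u * (g v)^-1)%g.
Definition d1 (f : T -> T -> G) : T -> T -> T -> G :=
  fun u v w => (f u v * f v w * f w u)%g.

Definition norm0 (g : T -> G) : R :=
  \sum_(s in Y | [exists v, (s == [set v]) && (g v != 1%g)]) weight R Y D s.
Definition norm1 (f : T -> T -> G) : R :=
  \sum_(s in Y | [exists u, exists v,
      [&& u != v, s == [set u; v] & f u v != 1%g]]) weight R Y D s.
Definition norm2 (h : T -> T -> T -> G) : R :=
  \sum_(s in Y | [exists u, exists v, exists w,
      [&& u != v, v != w, w != u, s == [set u; v; w] & h u v w != 1%g]])
    weight R Y D s.

Definition B0 (g : T -> G) : Prop :=
  exists c : G, forall v, vertexY v -> g v = c.
Definition B1 (f : T -> T -> G) : Prop :=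
  exists g : T -> G, forall u v, edgeY u v -> f u v = d0 g u v.
Definition Z1 (f : T -> T -> G) : Prop :=
  C1 f /\ forall u v w, triY u v w -> d1 f u v w = 1%g.

Definition dist0 (g : T -> G) (S : (T -> G) -> Prop) : R :=
  inf [set norm0 (fun v => (g v * (b v)^-1)%g) | b in S]%classic.
Definition dist1 (f : T -> T -> G) (S : (T -> T -> G) -> Prop) : R :=
  inf [set norm1 (fun u v => (f u v * (b u v)^-1)%g) | b in S]%classic.

(* h_0(Y;G) >= gamma  and  h_1(Y;G) >= gamma  (h_i is a minimum of ratios) *)
Definition h0_ge (gamma : R) : Prop :=
  forall g : T -> G, ~ B0 g -> gamma <= norm1 (d0 g) / dist0 g B0.
Definition h1_ge (gamma : R) : Prop :=
  forall f : T -> T -> G, C1 f -> ~ B1 f -> gamma <= norm2 (d1 f) / dist1 f B1.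
End Cochains.

(* gamma-coboundary expander with coefficients in G, for X pure d-dimensional:
   h_0, h_1 of every link X_sigma, dim sigma < d - 2 (incl. sigma = empty),
   are >= gamma; the link X_sigma is pure of dimension d - |sigma|. *)
Definition coboundary_expander (R : realType) (G : groupType) (V : finType)
    (X : {set {set V}}) (d : nat) (gamma : R) : Prop :=
  forall sigma, sigma \in X -> (#|sigma|.+1 < d)%N ->
    h0_ge G (link X sigma) (d - #|sigma|) gamma /\
    h1_ge G (link X sigma) (d - #|sigma|) gamma.

Definition rep_complex (V : finType) (X : {set {set V}}) (d k : nat)
  : {set {set {set V}}} :=
  [set S : {set {set V}} |
     (S == set0)
  || [exists s, [&& S == [set s], s \in X & #|s| == k.+1]]
  || [&& (2 <= #|S|)%N, (#|S| <= (d - k).+1)%N,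
         [forall s in S, (s \in X) && (#|s| == k.+1)],
         (\bigcup_(s in S) s) \in X,
         #|\bigcup_(s in S) s| == (#|S| + k)%N &
         #|\bigcap_(s in S) s| == k]].

(* A face of R_k(X) with at least two vertices is uniquely of the form
   {a ∪ τ : a ∈ A} with |τ| = k and A a face of the link X_τ, and its weight is
   c_τ times the weight of A in X_τ, where c_τ = |X_τ(d-k)| / |R_k(X)(d-k)|.
   So a 1-cochain f on R_k(X) restricts to 1-cochains f_τ(u,v) = f(u ∪ τ, v ∪ τ)
   on the links, and Σ_τ c_τ ‖d_1 f_τ‖ ≤ ‖d_1 f‖.  Choosing for every τ a g_τ
   with d_0 g_τ closest to f_τ and gluing them into
   b(a ∪ τ, c ∪ τ) = g_τ(a) g_τ(c)^-1 gives a 1-cocycle on R_k(X), because the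
   three vertices of a triangle of R_k(X) share the same τ; and
   ‖f b^-1‖ ≤ Σ_τ c_τ dist(f_τ, B^1).  Expansion of the links,
   γ dist(f_τ, B^1) ≤ ‖d_1 f_τ‖, concludes. *)

From mathcomp Require Import all_boot all_order all_algebra.
From mathcomp Require Import boolp classical_sets reals.
(* Re-imported so that [set0] and [subsetP] denote the finset notions again. *)
From mathcomp Require Import fintype finset.
From mathcomp Require Import zify.
Import Order.TTheory GRing.Theory Num.Theory.
Local Open Scope ring_scope.
Set Implicit Arguments. Unset Strict Implicit. Unset Printing Implicit Defensive.

Lemma inf_attained (R : realType) (I : finType) (F : I -> R) (E : set R) :
  (E !=set0)%classic -> (E `<=` range F)%classic -> E (inf E).
Proof.
move=> [e Ee] EF; have [i0 _ Fi0] := EF e Ee.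
pose hitsE := [pred i | `[< E (F i) >]].
have Ei0 : hitsE i0 by apply/asboolP; rewrite Fi0.
have [j /asboolP Ej minj] := arg_minP F Ei0.
have lbj : lbound E (F j).
  by move=> x Ex; have [i _ Fi] := EF x Ex; rewrite -Fi minj //; apply/asboolP; rewrite Fi.
suff -> : inf E = F j by [].
apply/le_anti/andP; split; first exact: ge_inf (ex_intro _ _ lbj) _ Ej.
exact: lb_le_inf (ex_intro _ e Ee) lbj.
Qed.

Lemma ler_sum_subset (R : numDomainType) (I : finType) (F : I -> R) (P Q : {pred I}) :
  (forall i, 0 <= F i) -> (forall i, P i -> Q i) ->
  \sum_(i | P i) F i <= \sum_(i | Q i) F i.
Proof.
move=> F_ge0 PQ; have -> : \sum_(i | P i) F i = \sum_(i | Q i && P i) F i.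
  by apply: eq_bigl => i; case Pi: (P i); rewrite ?andbT ?andbF ?PQ.
by rewrite [leRHS](bigID P) /= lerDl sumr_ge0.
Qed.

Section NonnegSums.
Variables (R : numDomainType) (I J : finType) (F : J -> R).
Hypothesis F_ge0 : forall j, 0 <= F j.

Lemma ler_sum_inj (h : I -> J) (Q : {pred I}) (P : {pred J}) :
  {in Q &, injective h} -> (forall i, Q i -> P (h i)) ->
  \sum_(i | Q i) F (h i) <= \sum_(j | P j) F j.
Proof.
move=> h_inj QP.
have -> : \sum_(i | Q i) F (h i) = \sum_(j in h @: [set i | Q i]) F j.
  rewrite big_imset /=; last by move=> i i'; rewrite !inE; apply: h_inj.
  by apply: eq_bigl => i; rewrite inE.
by apply: ler_sum_subset F_ge0 _ => j /imsetP[i]; rewrite inE => /QP + ->.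
Qed.

Lemma ler_sum_surj (h : I -> J) (Q : {pred I}) (P : {pred J}) :
  (forall j, P j -> exists2 i, Q i & h i = j) ->
  \sum_(j | P j) F j <= \sum_(i | Q i) F (h i).
Proof.
move=> h_onto; apply: (@le_trans _ _ (\sum_(i | Q i && P (h i)) F (h i))); last first.
  by apply: ler_sum_subset => [i|i /andP[]]; first exact: F_ge0.
rewrite (partition_big h P) /=; last by move=> i /andP[].
apply: ler_sum => j Pj; have [i Qi hij] := h_onto j Pj.
by rewrite (bigD1 i) /= ?Qi ?hij ?Pj ?eqxx // lerDl sumr_ge0.
Qed.
End NonnegSums.

Section LiftFace.
Variable V : finType.
Implicit Types (tau A B s : {set V}) (a b : V).

Definition lift_face tau A : {set {set V}} := [set a |: tau | a in A].

Lemma setU1_notin_inj tau a b :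
  a \notin tau -> b \notin tau -> a |: tau = b |: tau -> a = b.
Proof.
move=> /negPf a_tau _ ab_tau; have : a \in b |: tau by rewrite -ab_tau setU11.
by rewrite !inE a_tau orbF => /eqP.
Qed.

Lemma setIU1_neq tau a b : a != b -> (a |: tau) :&: (b |: tau) = tau.
Proof.
move=> /negPf ab; apply/setP => x; rewrite !inE.
by have [->|_] := eqVneq x a; rewrite ?ab //=; case: (x \in tau); rewrite ?orbT.
Qed.

Lemma setDU1_notin tau a b :
  a \notin tau -> a != b -> (a |: tau) :\: (b |: tau) = [set a].
Proof.
move=> /negPf a_tau /negPf ab; apply/setP => x; rewrite !inE.
by have [->|_] := eqVneq x a; rewrite ?a_tau ?ab //=; case: (x \in tau); rewrite ?orbT ?andbF.
Qed.

Lemma setD_card1_setU1 tau s :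
  tau \subset s -> #|s :\: tau| = 1%N -> exists2 a, a \notin tau & s = a |: tau.
Proof.
move=> tau_s /eqP/cards1P[a s_tau].
have /setDP[a_s a_tau] : a \in s :\: tau by rewrite s_tau set11.
exists a => //; apply/setP => x; rewrite !inE.
have [x_tau|x_tau] := boolP (x \in tau); first by rewrite orbT (subsetP tau_s).
by rewrite orbF -in_set1 -s_tau !inE x_tau.
Qed.

Section Disjoint.
Variables (tau A : {set V}).
Hypothesis tauA : [disjoint A & tau].

Lemma notin_disjoint a : a \in A -> a \notin tau.
Proof. by move=> aA; rewrite (disjointFr tauA aA). Qed.

Lemma card_lift_face : #|lift_face tau A| = #|A|.
Proof.
apply: card_in_imset => a b aA bA.
exact: setU1_notin_inj (notin_disjoint aA) (notin_disjoint bA).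
Qed.

Lemma lift_face_base tau' B :
  (1 < #|A|)%N -> lift_face tau A \subset lift_face tau' B -> tau = tau'.
Proof.
move=> /card_gt1P[a [b [aA bA ab]]] /subsetP AB.
have /imsetP[a' _ aa'] := AB _ (imset_f (fun a => a |: tau) aA).
have /imsetP[b' _ bb'] := AB _ (imset_f (fun a => a |: tau) bA).
have a'b' : a' != b'.
  apply: contra ab => /eqP a'b'; apply/eqP.
  by apply: setU1_notin_inj (notin_disjoint aA) (notin_disjoint bA) _; rewrite aa' bb' a'b'.
by rewrite -(setIU1_neq tau ab) aa' bb' setIU1_neq.
Qed.

Lemma lift_face_subset B : [disjoint B & tau] ->
  (lift_face tau A \subset lift_face tau B) = (A \subset B).
Proof.
move=> tauB; apply/idP/idP => [/subsetP AB|]; last exact: imsetS.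
apply/subsetP => a aA; have /imsetP[b bB ab] := AB _ (imset_f (fun a => a |: tau) aA).
by rewrite (setU1_notin_inj (notin_disjoint aA) _ ab) // (disjointFr tauB bB).
Qed.

Lemma bigcap_lift_face : (1 < #|A|)%N -> \bigcap_(s in lift_face tau A) s = tau.
Proof.
move=> /card_gt1P[a [b [aA bA ab]]]; apply/eqP; rewrite eqEsubset.
apply/andP; split; last by apply/bigcapsP => _ /imsetP[c _ ->]; apply: subsetUr.
apply/subsetP => x /bigcapP x_cap.
by rewrite -(setIU1_neq tau ab) in_setI !x_cap //; apply: imset_f.
Qed.

Lemma bigcup_lift_face : A != set0 -> \bigcup_(s in lift_face tau A) s = A :|: tau.
Proof.
case/set0Pn => a0 a0A; apply/eqP; rewrite eqEsubset; apply/andP; split.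
  by apply/bigcupsP => _ /imsetP[a aA ->]; apply: setSU; rewrite sub1set.
rewrite subUset; apply/andP; split.
  by apply/subsetP => a aA; apply/bigcupP; exists (a |: tau); [apply: imset_f | apply: setU11].
by apply: subset_trans (bigcup_sup _ (imset_f _ a0A)); apply: subsetUr.
Qed.

End Disjoint.

Lemma lift_face_inj tau A B : [disjoint A & tau] -> [disjoint B & tau] ->
  lift_face tau A = lift_face tau B -> A = B.
Proof.
move=> tauA tauB AB; apply/eqP; rewrite eqEsubset.
by rewrite -(lift_face_subset tauA tauB) -(lift_face_subset tauB tauA) AB subxx.
Qed.

End LiftFace.

Section RepresentationComplex.
Variables (V : finType) (X : {set {set V}}) (d k : nat).
Implicit Types (tau A t : {set V}) (S : {set {set V}}).
Local Notation RK := (rep_complex X d k).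

Lemma linkP tau A :
  reflect (exists2 t, (t \in X) && (tau \subset t) & A = t :\: tau) (A \in link X tau).
Proof.
apply: (iffP imsetP) => [[t tX ->]|[t tX ->]]; exists t => //.
  by move: tX; rewrite inE.
by rewrite inE.
Qed.

Lemma link_disjoint tau A : A \in link X tau -> [disjoint A & tau].
Proof. by case/linkP => t _ ->; rewrite disjoints_subset setDE subsetIr. Qed.

Lemma card_link_le tau A :
  pure_dim X d -> #|tau| = k -> A \in link X tau -> (#|A| <= (d - k).+1)%N.
Proof.
move=> [cardX _] <- /linkP[t /andP[tX tau_t] ->].
by have := cardX t tX; rewrite cardsD (setIidPr tau_t); lia.
Qed.

Lemma mem_rep_complex_gt1 S : (1 < #|S|)%N ->
  (S \in RK) = [&& (#|S| <= (d - k).+1)%N,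
     [forall s in S, (s \in X) && (#|s| == k.+1)],
     (\bigcup_(s in S) s) \in X,
     #|\bigcup_(s in S) s| == (#|S| + k)%N &
     #|\bigcap_(s in S) s| == k].
Proof.
move=> S_gt1; rewrite inE S_gt1 -[S == set0]negbK -card_gt0 (ltnW S_gt1) /=.
case: existsP => //= -[s /and3P[/eqP S1 _ _]].
by move: S_gt1; rewrite S1 cards1.
Qed.

Lemma rep_complex_card_le S : S \in RK -> (#|S| <= (d - k).+1)%N.
Proof.
rewrite inE => /orP[/orP[/eqP->|/existsP[s /and3P[/eqP-> _ _]]]|/and3P[_ //]].
  by rewrite cards0.
by rewrite cards1.
Qed.

Hypothesis scX : simplicial_complex X.

Lemma rep_complex_faceP S : S \in RK -> (1 < #|S|)%N ->
  exists tau A, [/\ tau \in X, #|tau| = k, A \in link X tau & S = lift_face tau A].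
Proof.
move=> SRK S_gt1; have [_ closedX] := scX.
move: SRK; rewrite mem_rep_complex_gt1 // => /and5P[_ /forall_inP Sk UX _ /eqP cap_k].
set tau := \bigcap_(s in S) s; set U := \bigcup_(s in S) s.
have [s0 s0S] : exists s0, s0 \in S by apply/card_gt0P; apply: ltnW.
have tau_U : tau \subset U := subset_trans (bigcap_inf _ s0S) (bigcup_sup _ s0S).
have Sform s : s \in S -> exists2 a, a \notin tau & s = a |: tau.
  move=> sS; have /andP[_ /eqP card_s] := Sk s sS.
  apply: setD_card1_setU1; first exact: bigcap_inf.
  by rewrite cardsD (setIidPr (bigcap_inf _ sS)) card_s cap_k subSnn.
exists tau, (U :\: tau); split => //; first exact: closedX tau_U.
  by apply/linkP; exists U; rewrite ?UX.
apply/setP => s; apply/idP/imsetP => [sS|[a /setDP[/bigcupP[s' s'S a_s'] a_tau] ->]].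
  have [a a_tau sE] := Sform s sS; rewrite sE in sS *; exists a => //.
  by rewrite in_setD a_tau (subsetP (bigcup_sup _ sS)) // setU11.
have [b _ s'E] := Sform s' s'S; move: a_s'; rewrite s'E.
by case/setU1P => [->|a_tau']; [rewrite -s'E | rewrite a_tau' in a_tau].
Qed.

Lemma rep_complex_lift_face tau A : #|tau| = k -> A \in link X tau ->
  (1 < #|A| <= (d - k).+1)%N -> lift_face tau A \in RK.
Proof.
move=> card_tau AL /andP[A_gt1 A_le]; have [_ closedX] := scX.
have tauA := link_disjoint AL; have /linkP[t /andP[tX tau_t] At] := AL.
have A_n0 : A != set0 by rewrite -card_gt0 ltnW.
have At_eq : A :|: tau = t.
  apply/setP => x; rewrite At !inE.
  by case: (boolP (x \in tau)) => [/(subsetP tau_t)->|]; rewrite ?orbT ?andbT ?orbF.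
rewrite mem_rep_complex_gt1 card_lift_face // bigcup_lift_face // bigcap_lift_face //.
rewrite At_eq tX card_tau eqxx A_le andbT /=; apply/andP; split.
  apply/forall_inP => _ /imsetP[a aA ->].
  rewrite cardsU1 (notin_disjoint tauA aA) card_tau eqxx andbT.
  by apply: closedX tX _; rewrite -At_eq setSU // sub1set.
by rewrite -At_eq cardsU (disjoint_setI0 tauA) cards0 subn0 card_tau.
Qed.

Lemma card_top_faces_lift tau A :
  #|tau| = k -> (0 < d - k)%N -> A \in link X tau -> (1 < #|A|)%N ->
  #|[set S in top_faces RK (d - k) | lift_face tau A \subset S]| =
  #|[set B in top_faces (link X tau) (d - k) | A \subset B]|.
Proof.
move=> card_tau D_gt0 AL A_gt1; have tauA := link_disjoint AL.
set tops := [set B in top_faces (link X tau) (d - k) | A \subset B].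
suff -> : [set S in top_faces RK (d - k) | lift_face tau A \subset S] =
          [set lift_face tau B | B in tops].
  apply: card_in_imset => B B' /setIdP[/setIdP[BL _] _] /setIdP[/setIdP[B'L _] _].
  exact: lift_face_inj (link_disjoint BL) (link_disjoint B'L).
apply/setP => S; apply/idP/imsetP => [|[B /setIdP[/setIdP[BL /eqP card_B] AB] ->]].
  case/setIdP => /setIdP[SRK /eqP card_S] AS.
  have S_gt1 : (1 < #|S|)%N by rewrite card_S ltnS.
  have [tau' [B [_ _ BL SB]]] := rep_complex_faceP SRK S_gt1.
  rewrite SB in AS card_S *; have tau'E := lift_face_base tauA A_gt1 AS; subst tau'.
  have tauB := link_disjoint BL; exists B => //.
  by rewrite !inE BL -(lift_face_subset tauA tauB) AS -(card_lift_face tauB) card_S eqxx.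
have tauB := link_disjoint BL.
apply/setIdP; split; last by rewrite (lift_face_subset tauA tauB).
apply/setIdP; split; last by rewrite card_lift_face // card_B.
by apply: rep_complex_lift_face; rewrite // card_B ltnS D_gt0 leqnn.
Qed.

Definition link_coef (R : realType) tau : R :=
  #|top_faces (link X tau) (d - k)|%:R / #|top_faces RK (d - k)|%:R.

Lemma weight_lift_face (R : realType) tau A :
  #|tau| = k -> (0 < d - k)%N -> A \in link X tau -> (1 < #|A|)%N ->
  weight R RK (d - k) (lift_face tau A) =
  link_coef R tau * weight R (link X tau) (d - k) A.
Proof.
move=> card_tau D_gt0 AL A_gt1.
rewrite /weight /link_coef card_top_faces_lift // card_lift_face ?link_disjoint //.
set n := #|[set B in _ | _]|; set Nt := #|top_faces (link X tau) _|.
have [Nt0|Nt_neq0] := eqVneq Nt 0%N.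
  suff -> : n = 0%N by rewrite !mul0r mulr0.
  by apply/eqP; rewrite -leqn0 -Nt0 subset_leq_card //; apply/subsetP => B /setIdP[].
rewrite !natrM !invfM [RHS]mulrC -!mulrA; congr (_ * (_ * _)).
by rewrite mulKf // pnatr_eq0.
Qed.

End RepresentationComplex.

Lemma card_set3_gt2 (T : finType) (s t r : T) :
  s != t -> t != r -> r != s -> (2 < #|[set s; t; r]|)%N.
Proof.
by move=> st tr rs; apply/card_gt2P; exists s, t, r; rewrite !inE !eqxx ?orbT.
Qed.

Section CochainNorms.
Variables (R : realType) (G : groupType) (T : finType) (Y : {set {set T}}) (D : nat).

Definition supp1 (h : T -> T -> G) (s : {set T}) : bool :=
  [exists u, exists v, [&& u != v, s == [set u; v] & h u v != 1%g]].

Definition supp2 (h : T -> T -> T -> G) (s : {set T}) : bool :=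
  [exists u, exists v, exists w,
    [&& u != v, v != w, w != u, s == [set u; v; w] & h u v w != 1%g]].

Lemma weight_ge0 s : 0 <= weight R Y D s.
Proof. by rewrite divr_ge0 ?ler0n. Qed.

Lemma norm1_ge0 (h : T -> T -> G) : 0 <= norm1 R Y D h.
Proof. by rewrite sumr_ge0 // => s _; apply: weight_ge0. Qed.

Lemma norm2_ge0 (h : T -> T -> T -> G) : 0 <= norm2 R Y D h.
Proof. by rewrite sumr_ge0 // => s _; apply: weight_ge0. Qed.

Lemma eq_norm1 (h1 h2 : T -> T -> G) : (forall u v, edgeY Y u v -> h1 u v = h2 u v) ->
  norm1 R Y D h1 = norm1 R Y D h2.
Proof.
move=> h12; apply: eq_bigl => s; case sY: (s \in Y) => //=.
apply/existsP/existsP => -[u /existsP[v /and3P[uv /eqP sE h_uv]]];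
  exists u; apply/existsP; exists v; rewrite uv sE eqxx /=.
  by rewrite -h12 // /edgeY uv -sE sY.
by rewrite h12 // /edgeY uv -sE sY.
Qed.

Lemma norm1_mulgV (f : T -> T -> G) : norm1 R Y D (fun u v => (f u v * (f u v)^-1)%g) = 0.
Proof.
rewrite /norm1 big_pred0 // => s; apply/negbTE; rewrite negb_and; apply/orP; right.
by apply/existsPn => u; apply/existsPn => v; rewrite mulgV eqxx !andbF.
Qed.

Section Distance.
Variables (f : T -> T -> G) (S : (T -> T -> G) -> Prop).

Lemma dist1_le b : S b -> dist1 R Y D f S <= norm1 R Y D (fun u v => (f u v * (b u v)^-1)%g).
Proof.
by move=> Sb; apply: ge_inf; [exists 0 => _ [c _ <-]; apply: norm1_ge0 | exists b].
Qed.

Lemma dist1_ge0 b : S b -> 0 <= dist1 R Y D f S.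
Proof.
move=> Sb; apply: lb_le_inf; first by eexists; exists b.
by move=> _ [c _ <-]; apply: norm1_ge0.
Qed.

Lemma dist1_mem : S f -> dist1 R Y D f S = 0.
Proof.
by move=> Sf; apply/le_anti; rewrite (dist1_ge0 Sf) -(norm1_mulgV f) dist1_le.
Qed.

End Distance.

Lemma dist1_B1_attained (f : T -> T -> G) : exists g : T -> G,
  norm1 R Y D (fun u v => (f u v * (d0 g u v)^-1)%g) = dist1 R Y D f (B1 Y).
Proof.
set E := [set norm1 R Y D (fun u v => (f u v * (b u v)^-1)%g) | b in B1 Y]%classic.
have : E (inf E).
  apply: (@inf_attained R _ (fun B : {set {set T}} => \sum_(s in Y | s \in B) weight R Y D s)).
    exists (norm1 R Y D (fun u v => (f u v * 1^-1)%g)), (fun _ _ => 1%g) => //.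
    by exists (fun _ => 1%g) => u v _; rewrite /d0 invg1 mulg1.
  move=> _ [b _ <-]; exists [set s | supp1 (fun u v => (f u v * (b u v)^-1)%g) s] => //.
  by apply: eq_bigl => s; rewrite inE.
move=> [b [g bg] bE]; exists g; rewrite /dist1 -/E -bE.
by apply: eq_norm1 => u v uv; rewrite bg.
Qed.

Lemma h1_ge_dist1_le (gamma : R) (f : T -> T -> G) : h1_ge G Y D gamma -> C1 Y f ->
  gamma * dist1 R Y D f (B1 Y) <= norm2 R Y D (d1 f).
Proof.
move=> h1Y Cf; have [dist_le0|dist_gt0] := leP (dist1 R Y D f (B1 Y)) 0.
  have B1_1 : B1 Y (fun _ _ => 1%g : G) by exists (fun _ => 1%g) => u v _; rewrite /d0 mulgV.
  have -> : dist1 R Y D f (B1 Y) = 0 by apply/le_anti; rewrite dist_le0 (dist1_ge0 _ B1_1).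
  by rewrite mulr0 norm2_ge0.
rewrite mulrC -ler_pdivlMl // mulrC h1Y // => Bf.
by move: dist_gt0; rewrite dist1_mem // ltxx.
Qed.

End CochainNorms.

Section Gluing.
Variables (R : realType) (G : groupType) (V : finType) (X : {set {set V}}) (d k : nat).
Hypothesis scX : simplicial_complex X.
Local Notation RK := (rep_complex X d k).
Local Notation D := (d - k)%N.

(* On an edge {a ∪ τ, c ∪ τ} of R_k(X), s ∩ t is the base τ and s \ t, t \ s are the
   singletons {a}, {c}; the default [1] is never reached on edges. *)
Definition glue_cochain (g : {set V} -> V -> G) (s t : {set V}) : G :=
  (oapp (g (s :&: t)) 1 [pick x in s :\: t] *
   (oapp (g (s :&: t)) 1 [pick x in t :\: s])^-1)%g.

Definition restrict_cochain (f : {set V} -> {set V} -> G) (tau : {set V}) : V -> V -> G :=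
  fun u v => f (u |: tau) (v |: tau).

Lemma glue_cochain_lift (g : {set V} -> V -> G) (tau : {set V}) a c :
  a \notin tau -> c \notin tau -> a != c ->
  glue_cochain g (a |: tau) (c |: tau) = d0 (g tau) a c.
Proof.
move=> a_tau c_tau ac.
by rewrite /glue_cochain setIU1_neq // !setDU1_notin ?pick_set1 // eq_sym.
Qed.

Lemma glue_cochain_Z1 (g : {set V} -> V -> G) : Z1 RK (glue_cochain g).
Proof.
split=> [s t _|s t r /and4P[st tr rs SRK]]; first by rewrite /glue_cochain setIC invgF.
have [tau [A [_ _ AL SA]]] := rep_complex_faceP scX SRK (ltnW (card_set3_gt2 st tr rs)).
have tauA := link_disjoint AL.
have /imsetP[a aA sE] : s \in lift_face tau A by rewrite -SA !inE eqxx.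
have /imsetP[b bA tE] : t \in lift_face tau A by rewrite -SA !inE eqxx orbT.
have /imsetP[c cA rE] : r \in lift_face tau A by rewrite -SA !inE eqxx !orbT.
have neq x y : x |: tau != y |: tau -> x != y by apply: contra => /eqP->.
rewrite /d1 sE tE rE !glue_cochain_lift ?(notin_disjoint tauA) ?neq -?sE -?tE -?rE //.
by rewrite /d0 !divgKA mulgV.
Qed.

Lemma C1_restrict (f : {set V} -> {set V} -> G) (tau : {set V}) :
  #|tau| = k -> (0 < D)%N -> C1 RK f -> C1 (link X tau) (restrict_cochain f tau).
Proof.
move=> card_tau D_gt0 Cf u v /andP[uv uvL]; apply: Cf.
have tau_uv := link_disjoint uvL.
have u_tau : u \notin tau := notin_disjoint tau_uv (set21 u v).
have v_tau : v \notin tau := notin_disjoint tau_uv (set22 u v).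
rewrite /edgeY; apply/andP; split.
  by apply: contra uv => /eqP/(setU1_notin_inj u_tau v_tau)->.
have -> : [set u |: tau; v |: tau] = lift_face tau [set u; v].
  by rewrite /lift_face imsetU1 imset_set1.
by apply: rep_complex_lift_face; rewrite // cards2 uv.
Qed.

Lemma sum_lift_faces (Q : {set V} -> {set V} -> bool) : (0 < D)%N ->
  (forall tau A, Q tau A -> (A \in link X tau) && (1 < #|A|)%N) ->
  \sum_(tau in X | #|tau| == k)
     link_coef X d k R tau * \sum_(A | Q tau A) weight R (link X tau) D A =
  \sum_(p | (p.1 \in X) && (#|p.1| == k) && Q p.1 p.2) weight R RK D (lift_face p.1 p.2).
Proof.
move=> D_gt0 QL; under eq_bigr do rewrite mulr_sumr.
rewrite pair_big_dep /=; apply: eq_bigr => -[tau A] /= /andP[/andP[_ /eqP card_tau]].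
by case/QL/andP => AL A_gt1; rewrite weight_lift_face.
Qed.

Lemma dist1_Z1_le (f : {set V} -> {set V} -> G) : (0 < D)%N ->
  dist1 R RK D f (Z1 RK) <= \sum_(tau in X | #|tau| == k)
    link_coef X d k R tau * dist1 R (link X tau) D (restrict_cochain f tau) (B1 (link X tau)).
Proof.
move=> D_gt0.
have [g gE] := choice (fun tau => dist1_B1_attained R (link X tau) D (restrict_cochain f tau)).
pose err tau u v := (restrict_cochain f tau u v * (d0 (g tau) u v)^-1)%g.
under eq_bigr do rewrite -gE.
rewrite (sum_lift_faces
  (Q := fun tau A => (A \in link X tau) && supp1 (err tau) A)) //; last first.
  move=> tau A /andP[-> /existsP[u /existsP[v /and3P[uv /eqP-> _]]]].
  by rewrite cards2 uv.
apply: le_trans (dist1_le _ _ _ _ (glue_cochain_Z1 g)) _.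
apply: ler_sum_surj => [S|S /andP[SRK /existsP[s /existsP[t /and3P[st /eqP SE err_st]]]]].
  exact: weight_ge0.
have S_gt1 : (1 < #|S|)%N by rewrite SE cards2 st.
have [tau [A [tauX card_tau AL SA]]] := rep_complex_faceP scX SRK S_gt1.
have tauA := link_disjoint AL.
have /imsetP[a aA sE] : s \in lift_face tau A by rewrite -SA SE set21.
have /imsetP[c cA tE] : t \in lift_face tau A by rewrite -SA SE set22.
have ac : a != c by apply: contra st => /eqP ac; rewrite sE tE ac.
have AE : A = [set a; c].
  apply/eqP; rewrite eq_sym eqEcard subUset !sub1set aA cA /=.
  by rewrite -(card_lift_face tauA) -SA SE !cards2 st ac.
exists (tau, A) => //=; rewrite tauX card_tau eqxx AL /=.
apply/existsP; exists a; apply/existsP; exists c; rewrite ac AE eqxx /=.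
by move: err_st; rewrite sE tE glue_cochain_lift ?(notin_disjoint tauA).
Qed.

Lemma sum_norm2_restrict_le (f : {set V} -> {set V} -> G) : pure_dim X d -> (0 < D)%N ->
  \sum_(tau in X | #|tau| == k)
    link_coef X d k R tau * norm2 R (link X tau) D (d1 (restrict_cochain f tau))
  <= norm2 R RK D (d1 f).
Proof.
move=> pdX D_gt0.
pose Q tau A := (A \in link X tau) && supp2 (d1 (restrict_cochain f tau)) A.
have QL tau A : Q tau A -> (A \in link X tau) && (1 < #|A|)%N.
  case/andP=> -> /existsP[u /existsP[v /existsP[w /and5P[uv vw wu /eqP-> _]]]].
  exact: ltnW (card_set3_gt2 uv vw wu).
rewrite (sum_lift_faces (Q := Q)) //.
apply: ler_sum_inj => [S|[tau A] [tau' A'] /= /andP[_ QA] /andP[_ QA'] E|].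
- exact: weight_ge0.
- have /andP[AL A_gt1] := QL _ _ QA; have /andP[A'L _] := QL _ _ QA'.
  have tauA := link_disjoint AL; have tau'A' := link_disjoint A'L.
  have sub : lift_face tau A \subset lift_face tau' A' by rewrite E.
  have tau'E := lift_face_base tauA A_gt1 sub; subst tau'.
  by congr (_, _); apply: lift_face_inj tauA tau'A' E.
move=> [tau A] /= /andP[/andP[_ /eqP card_tau] QA].
have /andP[AL A_gt1] := QL _ _ QA; have tauA := link_disjoint AL.
move: QA => /andP[_ /existsP[u /existsP[v /existsP[w /and5P[uv vw wu /eqP AE err]]]]].
have lift_neq x y : x \in A -> y \in A -> x != y -> x |: tau != y |: tau.
  move=> xA yA; apply: contra => /eqP.
  by move/(setU1_notin_inj (notin_disjoint tauA xA) (notin_disjoint tauA yA))->.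
have [uA vA wA] : [/\ u \in A, v \in A & w \in A] by rewrite AE !inE !eqxx ?orbT.
rewrite rep_complex_lift_face ?A_gt1 ?(card_link_le pdX card_tau AL) //=.
apply/existsP; exists (u |: tau); apply/existsP; exists (v |: tau).
apply/existsP; exists (w |: tau).
by rewrite !lift_neq //= AE /lift_face !imsetU !imset_set1 eqxx.
Qed.

Lemma Z1_rep_complex_low (f : {set V} -> {set V} -> G) :
  (d <= k.+1)%N -> C1 RK f -> Z1 RK f.
Proof.
move=> d_le Cf; split=> // s t r /and4P[st tr rs /rep_complex_card_le].
by have := card_set3_gt2 st tr rs; lia.
Qed.

End Gluing.

Unset Implicit Arguments.

Theorem mainTheorem3 (R : realType) (G : groupType) (V : finType)
    (X : {set {set V}}) (d : nat) (gamma : R) (k : nat) :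
  simplicial_complex X -> pure_dim X d ->
  coboundary_expander G X d gamma ->
  (1 <= k)%N -> (k <= d - 1)%N ->
  forall f : {set V} -> {set V} -> G,
    C1 (rep_complex X d k) f ->
    gamma * dist1 R (rep_complex X d k) (d - k) f (Z1 (rep_complex X d k))
      <= norm2 R (rep_complex X d k) (d - k) (d1 f).
Proof.
move=> scX pdX expX _ _ f Cf.
have [gamma_lt0|gamma_ge0] := ltP gamma 0.
  apply: le_trans (norm2_ge0 _ _ _ _); rewrite nmulr_rle0 //.
  exact: (dist1_ge0 _ _ _ _ (glue_cochain_Z1 d k scX (fun _ _ => 1%g))).
have [d_le|k_lt] := leqP d k.+1.
  by rewrite dist1_mem ?mulr0 ?norm2_ge0 //; apply: Z1_rep_complex_low.
have D_gt0 : (0 < d - k)%N by rewrite subn_gt0 ltnW.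
apply: le_trans (sum_norm2_restrict_le R scX f pdX D_gt0).
apply: le_trans (ler_wpM2l gamma_ge0 (dist1_Z1_le R scX f D_gt0)) _.
rewrite mulr_sumr; apply: ler_sum => tau /andP[tauX /eqP card_tau].
rewrite mulrCA ler_wpM2l ?divr_ge0 ?ler0n //.
have tau_small : (#|tau|.+1 < d)%N by rewrite card_tau.
have [_ h1_link] := expX tau tauX tau_small.
apply: h1_ge_dist1_le; first by rewrite -card_tau.
exact: (C1_restrict scX card_tau D_gt0 Cf).
Qed.
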